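(* Let $A\in\mathbb{R}^{n\times n}$ be symmetric (not necessarily PSD), let $L>0$, and assume every nonzero eigenvalue of $A$ has magnitude at least $L$. Let $S\in\mathbb{R}^{k\times n}$ satisfy Assumption L for $A$ with parameter $L$. Then for every $i$ with $\lambda_i(A)>0$, the matrix $SAS^T$ has at least $i$ eigenvalues and $\lambda_i(SAS^T)\ge\lambda_i(A)-51L$.
   Context: $\lambda_i(M)$ denotes the $i$-th largest eigenvalue of a symmetric matrix $M$. $S$ is an $\alpha$-distortion subspace embedding for $X$ (or its column span) if $(1-\alpha)\|Xv\|^2\le\|SXv\|^2\le(1+\alpha)\|Xv\|^2$ for all $v$. Assumption L (for symmetric $A$ and $L>0$): for every $\lambda\ge L$, $S$ is a $\min(L/\lambda,1/10)$-distortion subspace embedding for the span of all eigenvectors of $A$ whose eigenvalue has magnitude at least $\lambda$. *)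

From mathcomp Require Import all_boot all_order all_algebra.
From mathcomp Require Import reals.
Set Implicit Arguments. Unset Strict Implicit. Unset Printing Implicit Defensive.
Import Order.TTheory GRing.Theory Num.Theory.
Local Open Scope ring_scope.

Section Defs.
Variable R : realType.

Definition sqnorm (m : nat) (x : 'cV[R]_m) : R := \sum_(i < m) x i 0 ^+ 2.

(* s is the list of eigenvalues of the square matrix M, counted with
   multiplicity and sorted in nonincreasing order; lambda_i(M) = s`_(i-1). *)
Definition eigenvalue_list (m : nat) (M : 'M[R]_m) (s : seq R) : Prop :=
  sorted >=%R s /\ char_poly M = \prod_(a <- s) ('X - a%:P).

Definition in_eigspan_ge (n : nat) (A : 'M[R]_n) (lam : R) (x : 'cV[R]_n) : Prop :=
  exists (vs : seq (R * 'cV[R]_n)),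
    (forall p, p \in vs -> A *m p.2 = p.1 *: p.2 /\ lam <= `|p.1|) /\
    x = \sum_(p <- vs) p.2.

Definition subspace_embedding (k n : nat) (S : 'M[R]_(k, n)) (alpha : R)
    (U : 'cV[R]_n -> Prop) : Prop :=
  forall x, U x ->
    (1 - alpha) * sqnorm x <= sqnorm (S *m x) /\
    sqnorm (S *m x) <= (1 + alpha) * sqnorm x.

Definition assumption_L (k n : nat) (S : 'M[R]_(k, n)) (A : 'M[R]_n) (L : R) : Prop :=
  forall lam : R, L <= lam ->
    subspace_embedding S (Num.min (L / lam) (1 / 10)) (in_eigspan_ge A lam).

End Defs.

(* Work in an orthonormal eigenbasis A = Q^T diag(d) Q and put T = S Q^T, so that
   S A S^T = T diag(d) T^T; let mu = lambda_i(A), which is at least L.  The coordinate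
   vectors a supported on {|d_j| >= mu} whose image a T^T T vanishes on {d_j <= -mu} form a
   space of dimension at least #{j | d_j >= mu} >= i, on which T^T is injective.  For
   y = a T^T, the coordinates with d_j >= mu contribute at least (mu - L) |y|^2 to
   y S A S^T y^T, by Assumption L at scale mu and Cauchy-Schwarz.  The small negative
   eigenvalues are grouped in dyadic bands 2^m L <= |d_j| < 2^(m+1) L; polarising
   Assumption L at scale 2^m L bounds the mass of a T^T T on the m-th band by 4^-m |a|^2,
   so together they cost at most 4 L |a|^2 <= 5 L |y|^2.  The Rayleigh quotient of
   S A S^T is thus at least mu - 6 L on a subspace of dimension i, and Courant-Fischer
   concludes. *)

From mathcomp Require Import all_boot all_order all_algebra.
From mathcomp Require Import reals complex spectral.
From mathcomp Require Import ring lra.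
Import Order.TTheory GRing.Theory Num.Theory.
Local Open Scope ring_scope.
Set Implicit Arguments. Unset Strict Implicit. Unset Printing Implicit Defensive.

Section BilinearForm.
Variable R : realFieldType.

Definition bform n (M : 'M[R]_n) (x y : 'rV[R]_n) : R := (x *m M *m y^T) 0 0.

Lemma bformE n (M : 'M[R]_n) x y : bform M x y = \sum_j (x *m M) 0 j * y 0 j.
Proof. by rewrite /bform [LHS]mxE; apply: eq_bigr => j _; rewrite [y^T _ _]mxE. Qed.

Lemma bform1E n (x y : 'rV[R]_n) : bform 1%:M x y = \sum_j x 0 j * y 0 j.
Proof. by rewrite bformE mulmx1. Qed.

Lemma bform_mulmxl n (M : 'M[R]_n) x y : bform M x y = bform 1%:M (x *m M) y.
Proof. by rewrite /bform mulmx1. Qed.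

Lemma bformDl n (M : 'M[R]_n) x y z : bform M (x + y) z = bform M x z + bform M y z.
Proof. by rewrite /bform !mulmxDl mxE. Qed.

Lemma bformDr n (M : 'M[R]_n) x y z : bform M x (y + z) = bform M x y + bform M x z.
Proof. by rewrite /bform linearD /= mulmxDr mxE. Qed.

Lemma bformZl n (M : 'M[R]_n) t x y : bform M (t *: x) y = t * bform M x y.
Proof. by rewrite /bform -!scalemxAl mxE. Qed.

Lemma bformZr n (M : 'M[R]_n) t x y : bform M x (t *: y) = t * bform M x y.
Proof. by rewrite /bform linearZ /= -scalemxAr mxE. Qed.

Lemma bformC n (M : 'M[R]_n) x y : M^T = M -> bform M x y = bform M y x.
Proof.
move=> sM; have tr00 : (x *m M *m y^T)^T 0 0 = (x *m M *m y^T) 0 0 by rewrite mxE.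
by rewrite /bform -tr00 !trmx_mul trmxK sM mulmxA.
Qed.

Lemma bform_sqrD n (M : 'M[R]_n) x y t : M^T = M ->
  bform M (x + t *: y) (x + t *: y) =
  bform M x x + 2 * t * bform M x y + t ^+ 2 * bform M y y.
Proof. by move=> sM; rewrite !bformDl !bformDr !bformZl !bformZr (bformC y x sM); ring. Qed.

Lemma bform1_ge0 n (x : 'rV[R]_n) : 0 <= bform 1%:M x x.
Proof. by rewrite bform1E; apply: sumr_ge0 => j _; rewrite -expr2 sqr_ge0. Qed.

Lemma bform1_eq0 n (x : 'rV[R]_n) : bform 1%:M x x = 0 -> x = 0.
Proof.
rewrite bform1E => /eqP; rewrite psumr_eq0 => [/allP x0|j _]; last by rewrite -expr2 sqr_ge0.
by apply/rowP => j; have := x0 j (mem_index_enum j); rewrite mxE -expr2 sqrf_eq0 => /eqP.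
Qed.

Lemma bform_diag n (e x : 'rV[R]_n) : bform (diag_mx e) x x = \sum_j e 0 j * x 0 j ^+ 2.
Proof. by rewrite bformE; apply: eq_bigr => j _; rewrite mul_mx_diag mxE; ring. Qed.

Lemma bform_conjmx m n (P : 'M[R]_(m, n)) (M : 'M[R]_m) y :
  bform (P^T *m M *m P) y y = bform M (y *m P^T) (y *m P^T).
Proof. by rewrite /bform trmx_mul trmxK !mulmxA. Qed.

End BilinearForm.

Section RealSpectral.
Variable R : rcfType.
Local Notation toC := (real_complex R).
Local Notation Re := (@complex.Re R).
Local Notation Im := (@complex.Im R).

Let ReM (x y : R[i]) : Re (x * y) = Re x * Re y - Im x * Im y.
Proof. by case: x; case: y. Qed.

Let ImM (x y : R[i]) : Im (x * y) = Re x * Im y + Im x * Re y.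
Proof. by case: x => a b; case: y => c d /=; rewrite addrC. Qed.

Let Re_sum (I : Type) (r : seq I) (F : I -> R[i]) :
  Re (\sum_(i <- r) F i) = \sum_(i <- r) Re (F i).
Proof. by apply: big_morph => // -[a b] [c d]. Qed.

Let Im_sum (I : Type) (r : seq I) (F : I -> R[i]) :
  Im (\sum_(i <- r) F i) = \sum_(i <- r) Im (F i).
Proof. by apply: big_morph => // -[a b] [c d]. Qed.

Lemma symmx_complex_eigenvalue_real n (A : 'M[R]_n) (w : 'rV[R[i]]_n) (z : R[i]) :
  A^T = A -> w != 0 -> w *m map_mx toC A = z *: w -> Im z = 0.
Proof.
move=> sA w_neq0 wA.
pose u := map_mx Re w; pose v := map_mx Im w.
have uA : u *m A = Re z *: u - Im z *: v.
  apply/rowP => j; have /rowP/(_ j) := wA; rewrite !mxE => /(congr1 Re).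
  rewrite Re_sum ReM => <-; apply: eq_bigr => k _; rewrite !mxE ReM /=.
  by rewrite mulr0 subr0.
have vA : v *m A = Re z *: v + Im z *: u.
  apply/rowP => j; have /rowP/(_ j) := wA; rewrite !mxE => /(congr1 Im).
  rewrite Im_sum ImM => <-; apply: eq_bigr => k _; rewrite !mxE ImM /=.
  by rewrite mulr0 add0r.
(* symmetry of A turns [<uA, v> = <u, vA>] into [Im z (|u|^2 + |v|^2) = 0] *)
have : Im z * (bform 1%:M u u + bform 1%:M v v) = 0.
  have := bformC u v sA; rewrite [LHS]bform_mulmxl [RHS]bform_mulmxl uA vA.
  rewrite -scaleNr !bformDl !bformZl (bformC v u (trmx1 _ _)); lra.
move/eqP; rewrite mulf_eq0 paddr_eq0 ?bform1_ge0 //.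
case/orP => [/eqP //|/andP[/eqP/bform1_eq0 u0 /eqP/bform1_eq0 v0]].
case/eqP: w_neq0; apply/rowP => j.
have := congr1 (fun M : 'rV[R]_n => M 0 j) u0; have := congr1 (fun M : 'rV[R]_n => M 0 j) v0.
by rewrite !mxE; case: (w 0 j) => a b /= -> ->.
Qed.

Lemma symmx_stable_eigenvector n (A U : 'M[R]_n) :
  A^T = A -> stablemx U A -> U != 0 ->
  exists2 v : 'rV_n, v != 0 & (v <= U)%MS /\ exists a, v *m A = a *: v.
Proof.
move=> sA stU U_neq0.
have rkU_gt0 : (0 < \rank U)%N by rewrite lt0n mxrank_eq0.
set M := restrict U A; set rb := row_base U.
have rbA : rb *m A = M *m rb by rewrite /M /restrict mulmxKpV // stable_row_base.
have [z /eigenvalueP [w wM w_neq0]] := eigenvalue_closed (map_mx toC M) rkU_gt0.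
pose wU := w *m map_mx toC rb.
have wUA : wU *m map_mx toC A = z *: wU.
  by rewrite /wU -mulmxA -map_mxM rbA map_mxM mulmxA wM scalemxAl.
have wU_neq0 : wU != 0.
  by rewrite /wU mul_mx_rowfree_eq0 // /row_free mxrank_map; apply: row_base_free.
have zE : z = toC (Re z).
  by move: (symmx_complex_eigenvalue_real sA wU_neq0 wUA); clear; case: z => a b /= ->.
have : eigenvalue M (Re z).
  rewrite eigenvalue_root_char -(fmorph_root toC) map_char_poly -eigenvalue_root_char.
  by apply/eigenvalueP; exists w; rewrite // wM; congr (_ *: _).
case/eigenvalueP => v0 v0M v0_neq0; exists (v0 *m rb).
  by rewrite mul_mx_rowfree_eq0 // row_base_free.
split; first by rewrite -(eq_row_base U) submxMl.
by exists (Re z); rewrite -mulmxA rbA mulmxA v0M scalemxAl.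
Qed.

Lemma symmx_orthonormal_eigenrows n (A : 'M[R]_n) : A^T = A -> forall r, (r <= n)%N ->
  exists (V : 'M[R]_(r, n)) (e : 'rV[R]_r), V *m V^T = 1%:M /\ V *m A = diag_mx e *m V.
Proof.
move=> sA; elim=> [_|r IH lt_rn]; first by exists 0, 0; split; apply/matrixP => -[].
have [V [e [VVt VA]]] := IH (ltnW lt_rn).
have rkV : \rank V = r.
  apply/eqP; rewrite eqn_leq rank_leq_row /=.
  by rewrite -{1}(mxrank1 R r) -VVt mxrankM_maxl.
set U := kermx V^T.
have U_neq0 : U != 0.
  by rewrite -mxrank_eq0 mxrank_ker mxrank_tr rkV subn_eq0 -ltnNge.
have AVt : A *m V^T = V^T *m diag_mx e.
  by rewrite -{1}sA -trmx_mul VA trmx_mul tr_diag_mx.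
have stU : stablemx U A.
  by apply/sub_kermxP; rewrite -mulmxA AVt mulmxA mulmx_ker mul0mx.
have [v v_neq0 [/sub_kermxP vVt [a vA]]] := symmx_stable_eigenvector sA stU U_neq0.
set s := bform 1%:M v v.
have s_gt0 : 0 < s by rewrite lt_def bform1_ge0 andbT; apply: contra_neq v_neq0 => /bform1_eq0.
pose v1 := (Num.sqrt s)^-1 *: v.
have v1v1 : v1 *m v1^T = 1%:M.
  rewrite (mx11_scalar (v1 *m v1^T)); congr (_%:M).
  have -> : (v1 *m v1^T) 0 0 = bform 1%:M v1 v1 by rewrite /bform mulmx1.
  rewrite bformZl bformZr -/s mulrA -expr2 exprVn.
  by rewrite sqr_sqrtr ?ltW // mulVf ?gt_eqF.
have v1Vt : v1 *m V^T = 0 by rewrite /v1 -scalemxAl vVt scaler0.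
rewrite -add1n; exists (col_mx v1 V), (row_mx (a%:M : 'rV_1) e); split.
  rewrite (tr_col_mx v1 V) mul_col_row v1v1 v1Vt VVt (scalar_mx_block 1 r).
  by rewrite -[V]trmxK -trmx_mul v1Vt trmx0.
rewrite mul_col_mx diag_mx_row mul_block_col !mul0mx addr0 add0r VA; congr col_mx.
rewrite /v1 -scalemxAl vA scalerA mulrC -scalerA.
have -> : diag_mx (a%:M : 'rV_1) = a%:M.
  by apply/matrixP => i j; rewrite !ord1 !mxE eqxx !mulr1n.
by rewrite mul_scalar_mx.
Qed.

Lemma symmx_spectral n (A : 'M[R]_n) : A^T = A ->
  exists (Q : 'M[R]_n) (d : 'rV[R]_n),
    [/\ Q *m Q^T = 1%:M, Q^T *m Q = 1%:M & Q *m A = diag_mx d *m Q].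
Proof.
move=> sA; have [Q [d [QQt QA]]] := symmx_orthonormal_eigenrows sA (leqnn n).
by exists Q, d; split=> //; apply: mulmx1C.
Qed.

End RealSpectral.

Lemma orthodiagE (R : comNzRingType) n (A Q : 'M[R]_n) (d : 'rV[R]_n) :
  Q^T *m Q = 1%:M -> Q *m A = diag_mx d *m Q -> A = Q^T *m diag_mx d *m Q.
Proof. by move=> QtQ QA; rewrite -mulmxA -QA mulmxA QtQ mul1mx. Qed.

Lemma char_poly_orthodiag (R : comNzRingType) n (A Q : 'M[R]_n) (d : 'rV[R]_n) :
  Q^T *m Q = 1%:M -> Q *m A = diag_mx d *m Q ->
  char_poly A = \prod_(j < n) ('X - (d 0 j)%:P).
Proof.
move=> QtQ QA; have AE := orthodiagE QtQ QA.
pose Qp := map_mx (@polyC R) Q.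
have QptQp : Qp^T *m Qp = 1%:M by rewrite /Qp map_trmx -map_mxM QtQ map_mx1.
have charE : char_poly_mx A = Qp^T *m char_poly_mx (diag_mx d) *m Qp.
  rewrite /char_poly_mx mulmxBr mulmxBl.
  have -> : Qp^T *m 'X%:M *m Qp = 'X%:M by rewrite scalar_mxC -mulmxA QptQp mulmx1.
  by rewrite /Qp map_trmx -!map_mxM -AE.
rewrite /char_poly charE !det_mulmx mulrAC -det_mulmx QptQp det1 mul1r.
rewrite -/(char_poly _) char_poly_trig ?diag_mx_is_trig //.
by apply: eq_bigr => j _; rewrite mxE eqxx mulr1n.
Qed.

Lemma orthodiag_eigenvalue (F : fieldType) n (A Q : 'M[F]_n) (d : 'rV[F]_n) j :
  Q *m Q^T = 1%:M -> Q *m A = diag_mx d *m Q -> eigenvalue A (d 0 j).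
Proof.
move=> QQt QA; apply/eigenvalueP; exists (row j Q).
  by rewrite -row_mul QA row_mul row_diag_mx -scalemxAl -rowE.
apply/eqP => Qj0; have := congr1 (fun M : 'M_n => M j j) QQt.
rewrite !mxE eqxx big1 => [|k _]; first by move/eqP; rewrite eq_sym oner_eq0.
by have := congr1 (fun M : 'rV_n => M 0 k) Qj0; rewrite !mxE => ->; rewrite mul0r.
Qed.

Section EigenvalueList.
Variable R : realType.

Lemma eigenvalue_list_mem n (A : 'M[R]_n) s x :
  eigenvalue_list A s -> x \in s -> eigenvalue A x.
Proof. by move=> [_ cpA] xs; rewrite eigenvalue_root_char cpA root_prod_XsubC. Qed.

Lemma eigenvalue_list_count n (A Q : 'M[R]_n) (d : 'rV[R]_n) s (P : pred R) :
  Q^T *m Q = 1%:M -> Q *m A = diag_mx d *m Q -> eigenvalue_list A s ->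
  count P s = #|[pred j | P (d 0 j)]|.
Proof.
move=> QtQ QA [_ cpA].
have /permP -> : perm_eq s [seq d 0 j | j <- index_enum 'I_n].
  by apply: prod_XsubC_eq; rewrite -cpA big_map (char_poly_orthodiag QtQ QA).
by rewrite count_map cardE /enum_mem size_filter.
Qed.

Lemma sorted_count_ge_nth (s : seq R) i : sorted >=%R s -> (0 < i <= size s)%N ->
  (i <= count (>= s`_i.-1)%R s)%N.
Proof.
move=> ss /andP[i_gt0 i_le]; set c := s`_i.-1.
rewrite -(cat_take_drop i s) count_cat (leq_trans _ (leq_addr _ _)) //.
have /[!all_count]/eqP -> : all (>= c)%R (take i s).
  apply/(all_nthP 0) => p; rewrite size_takel // => lt_pi; rewrite nth_take //=.
  apply: (sorted_leq_nth ge_trans (@lexx _ _) 0 ss); rewrite ?inE.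
  - exact: leq_trans lt_pi i_le.
  - by rewrite prednK.
  - by rewrite -ltnS prednK.
by rewrite size_takel.
Qed.

Lemma sorted_nth_ge_of_count (s : seq R) i c : sorted >=%R s -> (0 < i)%N ->
  (i <= count (>= c)%R s)%N -> (i <= size s)%N /\ c <= s`_i.-1.
Proof.
move=> ss i_gt0 i_le_cnt.
have i_le : (i <= size s)%N := leq_trans i_le_cnt (count_size _ _).
split=> //; rewrite leNgt; apply/negP => lt_ic.
have : (count (>= c)%R s <= i.-1)%N.
  rewrite -(cat_take_drop i.-1 s) count_cat.
  have -> : count (>= c)%R (drop i.-1 s) = 0%N.
    apply/eqP; rewrite -leqn0 leqNgt -has_count; apply/hasPn => x /(nthP 0) [p].
    rewrite size_drop => lt_p <-; rewrite nth_drop /= -ltNge.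
    apply: le_lt_trans lt_ic.
    apply: (sorted_leq_nth ge_trans (@lexx _ _) 0 ss); rewrite ?inE.
    - by rewrite prednK.
    - by rewrite -ltn_subRL.
    - exact: leq_addr.
  by rewrite addn0 (leq_trans (count_size _ _)) // size_take_min geq_minl.
by move/(leq_trans i_le_cnt); rewrite -ltnS prednK // ltnn.
Qed.

End EigenvalueList.

Section MinMax.
Variable R : realFieldType.

(* The easy half of the Courant-Fischer min-max principle. *)
Lemma mxrank_Rayleigh_ge n (B P : 'M[R]_n) (e : 'rV[R]_n) m (W : 'M[R]_(m, n)) c :
  P^T *m P = 1%:M -> P *m B = diag_mx e *m P ->
  (forall y : 'rV_n, (y <= W)%MS -> c * bform 1%:M y y <= bform B y y) ->
  (\rank W <= #|[pred j | (c <= e 0 j)%R]|)%N.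
Proof.
move=> PtP PB W_Rayleigh; set J := [pred j | (c <= e 0 j)%R].
have BE := orthodiagE PtP PB.
have E1 : 1%:M = P^T *m 1%:M *m P by rewrite mulmx1 PtP.
pose F : 'M_(n, #|J|) := P^T *m \matrix_(i, r) (i == enum_val r)%:R.
have yF y r : (y *m F) 0 r = (y *m P^T) 0 (enum_val r).
  rewrite mulmxA [LHS]mxE (bigD1 (enum_val r)) //= big1 => [|j /negbTE jr].
    by rewrite !mxE eqxx mulr1 addr0.
  by rewrite !mxE jr mulr0.
suff /eqP capW0 : (W :&: kermx F)%MS == 0.
  by have := mxrank_mul_ker W F; rewrite capW0 mxrank0 addn0 => <-; apply: rank_leq_col.
apply/rowV0P => y; rewrite sub_capmx => /andP [yW /sub_kermxP yF0].
set g := y *m P^T.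
have gJ j : j \in J -> g 0 j = 0.
  by move=> jJ; rewrite -(enum_rankK_in jJ jJ) -yF yF0 mxE.
have terms_ge0 j : 0 <= (c - e 0 j) * g 0 j ^+ 2.
  case: (boolP (j \in J)) => jJ; first by rewrite gJ // expr0n mulr0.
  by rewrite mulr_ge0 ?sqr_ge0 // subr_ge0 ltW // ltNge.
have /eqP : \sum_j (c - e 0 j) * g 0 j ^+ 2 = 0.
  apply/eqP; rewrite eq_le sumr_ge0 // andbT.
  rewrite (eq_bigr (fun j => c * (g 0 j * g 0 j) - e 0 j * g 0 j ^+ 2)) => [|j _]; last by ring.
  rewrite sumrB -mulr_sumr subr_le0 -bform_diag -bform1E -!bform_conjmx -BE -E1.
  exact: W_Rayleigh.
rewrite psumr_eq0 // => /allP g0.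
have -> : y = g *m P by rewrite -mulmxA PtP mulmx1.
suff -> : g = 0 by rewrite mul0mx.
apply/rowP => j; rewrite [RHS]mxE; case: (boolP (j \in J)) => [/gJ -> //|jJ].
have := g0 j (mem_index_enum j); rewrite mulf_eq0 sqrf_eq0 subr_eq0 => /orP[/eqP ce|/eqP //].
by move: jJ; rewrite inE ce lexx.
Qed.

End MinMax.

Lemma mxrank_Rayleigh_le_count (R : realType) n (B : 'M[R]_n) s m (W : 'M[R]_(m, n)) c :
  B^T = B -> eigenvalue_list B s ->
  (forall y : 'rV_n, (y <= W)%MS -> c * bform 1%:M y y <= bform B y y) ->
  (\rank W <= count (>= c)%R s)%N.
Proof.
move=> sB eigB W_Rayleigh; have [P [e [_ PtP PB]]] := symmx_spectral sB.
by rewrite (eigenvalue_list_count _ PtP PB eigB); apply: mxrank_Rayleigh_ge PtP PB _.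
Qed.

Section Dyadic.
Variable R : archiRealFieldType.

Lemma le_dyadic_sum (L x : R) M : 0 < L -> L <= x -> x < 2 ^+ M * L ->
  x <= 2 * \sum_(m < M) (if 2 ^+ m * L <= x then 2 ^+ m * L else 0).
Proof.
move=> L_gt0 Lx; elim: M => [|M IH] ltx; first by move: ltx; rewrite expr0 mul1r; lra.
rewrite big_ord_recr /=.
have : 0 <= \sum_(m < M) (if 2 ^+ m * L <= x then 2 ^+ m * L else 0).
  by apply: sumr_ge0 => m _; case: ifP => // _; rewrite mulr_ge0 ?exprn_ge0 // ltW.
case: ifP => [_|/negbT]; first by move: ltx; rewrite exprS; lra.
by rewrite -ltNge => /IH; lra.
Qed.

Lemma sum_invexp2_le2 M : \sum_(m < M) ((2 : R) ^+ m)^-1 <= 2.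
Proof.
suff : \sum_(m < M) ((2 : R) ^+ m)^-1 <= 2 - 2 * ((2 : R) ^+ M)^-1.
  have : 0 < ((2 : R) ^+ M)^-1 by rewrite invr_gt0 exprn_gt0.
  lra.
elim: M => [|M IH]; first by rewrite big_ord0 expr0 invr1; lra.
rewrite big_ord_recr /= exprS invfM.
have : 0 < ((2 : R) ^+ M)^-1 by rewrite invr_gt0 exprn_gt0.
lra.
Qed.

Lemma exists_exp2_ge (L x : R) : 0 < L -> exists M, x <= 2 ^+ M * L.
Proof.
move=> L_gt0; case: (lerP x 0) => [x_le0|x_gt0]; first by exists 0%N; rewrite expr0 mul1r; lra.
have xL_ge0 : 0 <= x / L by rewrite divr_ge0 ?ltW.
exists (Num.bound (x / L)); rewrite -ler_pdivrMr // ltW // (lt_le_trans (archi_boundP xL_ge0)) //.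
by rewrite -natrX ler_nat ltnW // ltn_expl.
Qed.

End Dyadic.

Lemma sum_mul_sqr_le (R : realFieldType) (I : finType) (P : pred I) (x y : I -> R) :
  (\sum_(i | P i) x i * y i) ^+ 2 <= (\sum_(i | P i) x i ^+ 2) * (\sum_(i | P i) y i ^+ 2).
Proof.
set X := \sum_(i | P i) x i ^+ 2; set Y := \sum_(i | P i) y i ^+ 2.
set Z := \sum_(i | P i) x i * y i.
have X_ge0 : 0 <= X by apply: sumr_ge0 => i _; apply: sqr_ge0.
have [X0|X_neq0] := eqVneq X 0.
  suff -> : Z = 0 by rewrite expr0n /= X0 mul0r.
  move/eqP: X0; rewrite psumr_eq0 => [/allP x0|i _]; last exact: sqr_ge0.
  rewrite /Z big1 // => i Pi.
  by move: (x0 i (mem_index_enum i)); rewrite Pi sqrf_eq0 => /eqP ->; rewrite mul0r.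
have X_gt0 : 0 < X by rewrite lt_def X_neq0.
(* Lagrange: the sum of squares of [X y_i - Z x_i] is [X (X Y - Z^2)] *)
have : 0 <= X * (X * Y - Z ^+ 2).
  have <- : \sum_(i | P i) (X * y i - Z * x i) ^+ 2 = X * (X * Y - Z ^+ 2).
    transitivity (\sum_(i | P i) (X ^+ 2 * y i ^+ 2 + (Z ^+ 2 * x i ^+ 2 - 2 * X * Z * (x i * y i)))).
      by apply: eq_bigr => i _; ring.
    by rewrite big_split sumrB /= -!mulr_sumr -/X -/Y -/Z; ring.
  by apply: sumr_ge0 => i _; apply: sqr_ge0.
by rewrite pmulr_rge0 // subr_ge0.
Qed.

Section EigenCoordinates.
Variable R : realFieldType.

Definition distortion (L t : R) : R := Num.min (L / t) (1 / 10).

Definition supported_ge n (d : 'rV[R]_n) (t : R) (a : 'rV[R]_n) : Prop :=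
  forall j, `|d 0 j| < t -> a 0 j = 0.

(* Assumption L read in an orthonormal eigenbasis of [A]: [d] lists the eigenvalues
   and [T = S Q^T], so that [|S x|^2] becomes [bform (T^T T) a a] for [x = Q^T a^T]. *)
Definition diag_assumption_L n k (d : 'rV[R]_n) (T : 'M[R]_(k, n)) (L : R) : Prop :=
  forall t, L <= t -> forall a, supported_ge d t a ->
    (1 - distortion L t) * bform 1%:M a a <= bform (T^T *m T) a a /\
    bform (T^T *m T) a a <= (1 + distortion L t) * bform 1%:M a a.

Lemma distortion_gt0 (L t : R) : 0 < L -> L <= t -> 0 < distortion L t.
Proof. by move=> L_gt0 Lt; rewrite lt_min; apply/andP; split; [apply: divr_gt0|]; lra. Qed.

Lemma distortion_le_tenth (L t : R) : distortion L t <= 1 / 10.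
Proof. by rewrite ge_min lexx orbT. Qed.

Lemma distortion_le (L t : R) : distortion L t <= L / t.
Proof. by rewrite ge_min lexx. Qed.

Lemma supported_geD n (d : 'rV[R]_n) t a b :
  supported_ge d t a -> supported_ge d t b -> supported_ge d t (a + b).
Proof. by move=> sa sb j lt_jt; rewrite mxE sa ?sb ?addr0. Qed.

Lemma supported_geZ n (d : 'rV[R]_n) t c a : supported_ge d t a -> supported_ge d t (c *: a).
Proof. by move=> sa j lt_jt; rewrite mxE sa ?mulr0. Qed.

End EigenCoordinates.

Lemma sqnorm_bform (R : realType) m (x : 'cV[R]_m) : sqnorm x = bform 1%:M x^T x^T.
Proof. by rewrite bform1E /sqnorm; apply: eq_bigr => i _; rewrite !mxE expr2. Qed.

Lemma assumption_L_diag (R : realType) n k (A Q : 'M[R]_n) (d : 'rV[R]_n)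
    (S : 'M[R]_(k, n)) L :
  A^T = A -> Q *m Q^T = 1%:M -> Q *m A = diag_mx d *m Q -> assumption_L S A L ->
  diag_assumption_L d (S *m Q^T) L.
Proof.
move=> sA QQt QA SL t Lt a sa.
pose x := Q^T *m a^T.
have x_span : in_eigspan_ge A t x.
  (* the columns of [Q^T] are eigenvectors; a coordinate with [|d_j| < t] contributes the
     zero vector, which may be tagged with the admissible eigenvalue [t] *)
  exists [seq (if t <= `|d 0 j| then d 0 j else t, a 0 j *: col j Q^T) | j <- index_enum 'I_n].
  split.
    move=> p /mapP [j _ ->] /=; case: ifP => dj; split => //; last exact: ler_norm.
      rewrite -tr_row -scalemxAr -[A]sA -trmx_mul -row_mul QA row_mul row_diag_mx.
      by rewrite -scalemxAl -rowE !linearZ /= !scalerA mulrC.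
    by rewrite sa ?scale0r ?mulmx0 ?scaler0 // ltNge dj.
  rewrite big_map; apply/matrixP => r c; rewrite ord1 summxE !mxE.
  by apply: eq_bigr => j _; rewrite !mxE mulrC.
have normx : bform 1%:M x^T x^T = bform 1%:M a a.
  by rewrite trmx_mul trmxK -bform_conjmx trmxK mulmx1 QQt.
have normSx : bform 1%:M (S *m x)^T (S *m x)^T = bform ((S *m Q^T)^T *m (S *m Q^T)) a a.
  by rewrite /x mulmxA trmx_mul trmxK -bform_conjmx mulmx1.
by have := SL t Lt x x_span; rewrite !sqnorm_bform normx normSx.
Qed.

Section RayleighLowerBound.
Variable R : realType.
Variables (n k : nat) (d : 'rV[R]_n) (T : 'M[R]_(k, n)) (L : R).
Hypothesis L_gt0 : 0 < L.
Hypothesis d_gap : forall j, d 0 j != 0 -> L <= `|d 0 j|.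
Hypothesis T_embed : diag_assumption_L d T L.
Local Notation G := (T^T *m T).

Lemma polar_embedding_bound t u a : L <= t -> supported_ge d t u -> supported_ge d t a ->
  bform 1%:M u a = 0 -> bform G u a = bform 1%:M u u ->
  bform 1%:M u u <= distortion L t ^+ 2 * bform 1%:M a a.
Proof.
move=> Lt su sa ua Gua; set al := distortion L t; set s := bform 1%:M u u.
have al_gt0 : 0 < al := distortion_gt0 L_gt0 Lt.
have [_ upper] := T_embed Lt (supported_geD su (supported_geZ al sa)).
have [lower _] := T_embed Lt (supported_geD su (supported_geZ (- al) sa)).
have G_sym : G^T = G by rewrite trmx_mul trmxK.
move: upper lower; rewrite !bform_sqrD ?trmx1 // ua Gua -/s -/al => upper lower.
have : 4 * al * s <= 2 * al * (s + al ^+ 2 * bform 1%:M a a) by nra.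
have : al * s <= al * (al ^+ 2 * bform 1%:M a a) by nra.
by rewrite ler_pM2l.
Qed.

(* Test [u + alpha a], [u - alpha a] against the embedding, with [u] the part of
   [a G] on the band: [u] is orthogonal to [a] and [<u, a>_G = |u|^2]. *)
Lemma negative_band_mass mu a t : L <= mu -> supported_ge d mu a -> L <= t ->
  \sum_(j | (d 0 j < 0) && (`|d 0 j| < mu) && (t <= `|d 0 j|)) (a *m G) 0 j ^+ 2
    <= (L / t) ^+ 2 * bform 1%:M a a.
Proof.
move=> Lmu sa Lt; have a_ge0 := bform1_ge0 a.
have Lt_ge0 : 0 <= L / t by rewrite divr_ge0 // ltW // (lt_le_trans L_gt0 Lt).
have [lt_mut|le_tmu] := ltP mu t.
  rewrite big_pred0; first by rewrite mulr_ge0 ?sqr_ge0.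
  by move=> j; apply/negP => /andP[/andP[_ lt_dmu] le_td]; lra.
pose band j := (d 0 j < 0) && (`|d 0 j| < mu) && (t <= `|d 0 j|).
pose u := \row_j (if band j then (a *m G) 0 j else 0).
have su : supported_ge d t u by move=> j lt_jt; rewrite mxE /band; case: ifP => // /andP[_]; lra.
have sa_t : supported_ge d t a by move=> j lt_jt; apply: sa; lra.
have ua : bform 1%:M u a = 0.
  rewrite bform1E big1 // => j _; rewrite mxE /band.
  by case: ifP => [/andP[/andP[_ /sa ->]] _|_]; rewrite ?mulr0 ?mul0r.
have Gua : bform G u a = bform 1%:M u u.
  rewrite bformC ?trmx_mul ?trmxK // [LHS]bformE bform1E; apply: eq_bigr => j _.
  by rewrite [u 0 j]mxE; case: ifP; rewrite ?mulr0.
have -> : \sum_(j | band j) (a *m G) 0 j ^+ 2 = bform 1%:M u u.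
  rewrite bform1E big_mkcond; apply: eq_bigr => j _; rewrite [u 0 j]mxE.
  by case: ifP; rewrite ?mulr0 ?expr2.
apply: le_trans (polar_embedding_bound Lt su sa_t ua Gua) _; apply: ler_wpM2r => //.
by rewrite lerXn2r ?nnegrE ?distortion_le // ltW ?distortion_gt0.
Qed.

Lemma dyadic_band_mass mu a m : L <= mu -> supported_ge d mu a ->
  (2 ^+ m * L) * \sum_(j | (d 0 j < 0) && (`|d 0 j| < mu) && (2 ^+ m * L <= `|d 0 j|))
     (a *m G) 0 j ^+ 2 <= L * ((2 : R) ^+ m)^-1 * bform 1%:M a a.
Proof.
move=> Lmu sa; have a_ge0 := bform1_ge0 a; have L_pos := L_gt0.
have exp_gt0 : 0 < (2 : R) ^+ m by rewrite exprn_gt0.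
have exp_ge1 : 1 <= (2 : R) ^+ m by rewrite exprn_ege1 // ler1n.
have Lt : L <= 2 ^+ m * L by nra.
apply: le_trans (ler_wpM2l _ (negative_band_mass Lmu sa Lt)) _; first by nra.
have -> : 2 ^+ m * L * ((L / (2 ^+ m * L)) ^+ 2 * bform 1%:M a a) =
    L * ((2 : R) ^+ m)^-1 * bform 1%:M a a.
  by field; apply/andP; split; apply/negP; move/eqP; lra.
by [].
Qed.

(* Split the small negative eigenvalues into dyadic bands [2^m L <= |d_j| < 2^(m+1) L];
   the band at [2^m L] costs at most [2^m L (L / 2^m L)^2 |a|^2 = 2^-m L |a|^2]. *)
Lemma small_negative_mass mu a : L <= mu -> supported_ge d mu a ->
  \sum_(j | (d 0 j < 0) && (`|d 0 j| < mu)) `|d 0 j| * (a *m G) 0 j ^+ 2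
    <= 4 * L * bform 1%:M a a.
Proof.
move=> Lmu sa; have a_ge0 := bform1_ge0 a; have L_pos := L_gt0.
have [M le_mu2ML] := exists_exp2_ge mu L_gt0.
pose f m (x : R) := if 2 ^+ m * L <= x then 2 ^+ m * L else 0.
pose small j := (d 0 j < 0) && (`|d 0 j| < mu).
set b := fun j => (a *m G) 0 j.
have dyadic : \sum_(j | small j) `|d 0 j| * b j ^+ 2 <=
    \sum_(j | small j) (2 * \sum_(m < M) f m `|d 0 j|) * b j ^+ 2.
  apply: ler_sum => j /andP [dj_lt0 dj_lt]; rewrite ler_wpM2r ?sqr_ge0 //.
  by apply: le_dyadic_sum; [|apply: d_gap; rewrite lt_eqF|lra].
apply: (le_trans dyadic).
have -> : \sum_(j | small j) (2 * \sum_(m < M) f m `|d 0 j|) * b j ^+ 2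
   = 2 * \sum_(m < M) (2 ^+ m * L) *
       \sum_(j | small j && (2 ^+ m * L <= `|d 0 j|)) b j ^+ 2.
  transitivity (2 * \sum_(m < M) \sum_(j | small j) f m `|d 0 j| * b j ^+ 2).
    rewrite exchange_big /= mulr_sumr; apply: eq_bigr => j _.
    by rewrite -mulrA mulr_suml.
  congr (_ * _); apply: eq_bigr => m _.
  rewrite [in RHS]big_mkcondr mulr_sumr; apply: eq_bigr => j _ /=.
  by rewrite /f; case: ifP; rewrite ?mulr0 ?mul0r.
apply: le_trans (_ : 2 * \sum_(m < M) L * ((2 : R) ^+ m)^-1 * bform 1%:M a a <= _).
  by rewrite ler_wpM2l // ler_sum // => m _; apply: dyadic_band_mass.
rewrite -mulr_suml -mulr_sumr.
have := sum_invexp2_le2 R M; set s2 := \sum_(m < M) _ => s2_le2.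
have : 0 <= (2 - s2) * (L * bform 1%:M a a) by rewrite mulr_ge0 ?mulr_ge0 //; lra.
lra.
Qed.

Definition adapted mu (a : 'rV[R]_n) : Prop :=
  supported_ge d mu a /\ forall j, mu <= `|d 0 j| -> d 0 j < mu -> (a *m G) 0 j = 0.

Lemma Rayleigh_numerator_ge mu a : L <= mu -> adapted mu a ->
  mu * \sum_(j | mu <= d 0 j) (a *m G) 0 j ^+ 2 - 4 * L * bform 1%:M a a
    <= \sum_j d 0 j * (a *m G) 0 j ^+ 2.
Proof.
move=> Lmu [sa aG0]; have L_pos := L_gt0.
have small := small_negative_mass Lmu sa.
rewrite [X in _ <= X](bigID (fun j => mu <= d 0 j)) /=.
have : mu * \sum_(j | mu <= d 0 j) (a *m G) 0 j ^+ 2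
    <= \sum_(j | mu <= d 0 j) d 0 j * (a *m G) 0 j ^+ 2.
  by rewrite mulr_sumr; apply: ler_sum => j jV; rewrite ler_wpM2r ?sqr_ge0.
have : - \sum_(j | (d 0 j < 0) && (`|d 0 j| < mu)) `|d 0 j| * (a *m G) 0 j ^+ 2 <=
    \sum_(j | ~~ (mu <= d 0 j)) d 0 j * (a *m G) 0 j ^+ 2.
  rewrite -sumrN big_mkcond [X in _ <= X]big_mkcond /=; apply: ler_sum => j _.
  have b2 := sqr_ge0 ((a *m G) 0 j); rewrite -ltNge.
  case: ifP => [/andP [dj_lt0 dj_lt]|dj_small].
    by rewrite ifT ?(ler0_norm (ltW dj_lt0)); lra.
  case: ifP => // dj_lt; have [/aG0 /(_ dj_lt) -> | dj_lt'] := lerP mu `|d 0 j|.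
    by rewrite expr0n mulr0.
  by rewrite mulr_ge0 // leNgt; apply: contraFN dj_small => ->.
lra.
Qed.

Lemma Rayleigh_adapted mu a : L <= mu -> adapted mu a ->
  (mu - 51%:R * L) * bform G a a <= \sum_j d 0 j * (a *m G) 0 j ^+ 2.
Proof.
move=> Lmu [sa aG0]; have L_pos := L_gt0.
set A := bform 1%:M a a; set s := bform G a a.
set N := \sum_(j | mu <= d 0 j) (a *m G) 0 j ^+ 2.
have A_ge0 : 0 <= A := bform1_ge0 a.
have N_ge0 : 0 <= N by apply: sumr_ge0 => j _; apply: sqr_ge0.
have al_gt0 := distortion_gt0 L_gt0 Lmu; have al_le := distortion_le_tenth L mu.
have mu_al : mu * distortion L mu <= L.
  by rewrite mulrC -ler_pdivlMr ?distortion_le //; lra.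
have [s_ge _] : (1 - distortion L mu) * A <= s /\ _ := T_embed Lmu sa.
have s_sqr : s ^+ 2 <= N * A.
  have -> : s = \sum_(j | mu <= d 0 j) (a *m G) 0 j * a 0 j.
    rewrite /s bformE (bigID (fun j => mu <= d 0 j)) /= [X in _ + X]big1 ?addr0 // => j.
    rewrite -ltNge => dj_lt.
    have [/aG0 -> // | /sa ->] := lerP mu `|d 0 j|; by rewrite ?mul0r ?mulr0.
  apply: le_trans (sum_mul_sqr_le _ _ _) _; rewrite ler_wpM2l //.
  rewrite /A bform1E [X in _ <= X](bigID (fun j => mu <= d 0 j)) /= -[X in X <= _]addr0.
  apply: lerD; first by apply: ler_sum => j _; rewrite expr2.
  by apply: sumr_ge0 => j _; rewrite -expr2 sqr_ge0.
have := Rayleigh_numerator_ge Lmu (conj sa aG0); rewrite -/A -/N => quad_ge.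
(* [(1 - alpha) A <= s], [s^2 <= N A] and [alpha mu <= L] leave a loss of [6 L s] *)
have s_ge0 : 0 <= s by nra.
have N_ge : (1 - distortion L mu) * s <= N.
  have [->|s_neq0] := eqVneq s 0; first by rewrite mulr0.
  have s_gt0 : 0 < s by rewrite lt_def s_neq0.
  by rewrite -(ler_pM2r s_gt0) -mulrA -expr2; nra.
have : 9 * A <= 10 * s by nra.
have : mu * s - L * s <= mu * N by nra.
nra.
Qed.

(* [adapted mu] imposes one linear constraint per coordinate with [d_j < mu], and [T^T]
   is injective on its solutions by Assumption L at scale [mu]. *)
Lemma adapted_space mu : L <= mu ->
  exists K : 'M[R]_n, (#|[pred j | (mu <= d 0 j)%R]| <= \rank (K *m T^T))%N /\
    forall z : 'rV_n, adapted mu (z *m K).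
Proof.
move=> Lmu; set V := [pred j | (mu <= d 0 j)%R].
pose C : 'M[R]_(n, #|[predC V]|) := \matrix_(i, r)
  (if mu <= `|d 0 (enum_val r)| then G i (enum_val r) else (i == enum_val r)%:R).
have aC (a : 'rV_n) r : (a *m C) 0 r =
    if mu <= `|d 0 (enum_val r)| then (a *m G) 0 (enum_val r) else a 0 (enum_val r).
  rewrite [LHS]mxE; case: ifP => dr.
    by rewrite [RHS]mxE; apply: eq_bigr => i _; rewrite mxE dr.
  rewrite (bigD1 (enum_val r)) //= big1 => [|i /negbTE ir]; last by rewrite mxE dr ir mulr0.
  by rewrite mxE dr eqxx mulr1 addr0.
have kerC (a : 'rV_n) : a *m C = 0 -> adapted mu a.
  move=> aC0; split=> [j dj_lt | j dj_ge dj_lt].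
    have jV : j \in [predC V] by rewrite !inE -ltNge (le_lt_trans (ler_norm _) dj_lt).
    have := aC a (enum_rank_in jV j); rewrite enum_rankK_in // aC0 mxE.
    by rewrite leNgt dj_lt.
  have jV : j \in [predC V] by rewrite !inE -ltNge.
  by have := aC a (enum_rank_in jV j); rewrite enum_rankK_in // aC0 mxE dj_ge.
exists (kermx C); split; last by move=> z; apply: kerC; rewrite -mulmxA mulmx_ker mulmx0.
have /eqP capT0 : (kermx C :&: kermx T^T)%MS == 0.
  apply/rowV0P => y; rewrite sub_capmx => /andP [/sub_kermxP /kerC [sy _] /sub_kermxP yT0].
  have [lower _] := T_embed Lmu sy.
  have Gy0 : bform G y y = 0 by rewrite /bform mulmxA yT0 !mul0mx mxE.
  have := distortion_le_tenth L mu; have := bform1_ge0 y.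
  by rewrite Gy0 in lower; move=> *; apply: bform1_eq0; nra.
have := mxrank_mul_ker (kermx C) T^T; rewrite capT0 mxrank0 addn0 => ->.
rewrite mxrank_ker (leq_trans _ (leq_sub2l n (rank_leq_col C))) //.
by rewrite -[X in (_ <= X - _)%N]card_ord -(cardC V) addnK.
Qed.

Lemma Rayleigh_lower_bound mu : L <= mu ->
  exists W : 'M[R]_(n, k), (#|[pred j | (mu <= d 0 j)%R]| <= \rank W)%N /\
    forall y : 'rV_k, (y <= W)%MS ->
      (mu - 51%:R * L) * bform 1%:M y y <= bform (T *m diag_mx d *m T^T) y y.
Proof.
move=> Lmu; have [K [rkK K_adapted]] := adapted_space Lmu.
exists (K *m T^T); split=> // _ /submxP [z ->]; rewrite mulmxA.
have -> : bform 1%:M (z *m K *m T^T) (z *m K *m T^T) = bform G (z *m K) (z *m K).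
  by rewrite -bform_conjmx mulmx1.
have -> : T *m diag_mx d *m T^T = T^T^T *m diag_mx d *m T^T by rewrite trmxK.
rewrite bform_conjmx trmxK bform_diag.
by have := Rayleigh_adapted Lmu (K_adapted z); rewrite !mulmxA.
Qed.

End RayleighLowerBound.

Unset Implicit Arguments.

Theorem mainTheorem14 (R : realType) (n k : nat) (A : 'M[R]_n) (S : 'M[R]_(k, n))
    (L : R) (sA : seq R) (sB : seq R) :
  A^T = A ->
  0 < L ->
  (forall a : R, eigenvalue A a -> a != 0 -> L <= `|a|) ->
  assumption_L S A L ->
  eigenvalue_list A sA ->
  eigenvalue_list (S *m A *m S^T) sB ->
  forall i : nat, (0 < i)%N -> (i <= size sA)%N -> 0 < sA`_i.-1 ->
    (i <= size sB)%N /\ sA`_i.-1 - 51%:R * L <= sB`_i.-1.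
Proof.
move=> symA L_gt0 gapA SL eigA eigB i i_gt0 i_le mu_gt0; set mu := sA`_i.-1.
have [Q [d [QQt QtQ QA]]] := symmx_spectral symA.
have Lmu : L <= mu.
  have mu_eig : eigenvalue A mu by apply: eigenvalue_list_mem eigA _; rewrite mem_nth // prednK.
  by have := gapA mu mu_eig (lt0r_neq0 mu_gt0); rewrite gtr0_norm.
have gap_d j : d 0 j != 0 -> L <= `|d 0 j| by apply: gapA; apply: orthodiag_eigenvalue QQt QA.
have [W [rkW W_Rayleigh]] :=
  Rayleigh_lower_bound L_gt0 gap_d (assumption_L_diag symA QQt QA SL) Lmu.
have BE : S *m A *m S^T = (S *m Q^T) *m diag_mx d *m (S *m Q^T)^T.
  by rewrite {1}(orthodiagE QtQ QA) trmx_mul trmxK !mulmxA.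
have symB : (S *m A *m S^T)^T = S *m A *m S^T by rewrite !trmx_mul trmxK symA mulmxA.
have rkW_le := mxrank_Rayleigh_le_count symB eigB (W := W) (c := mu - 51%:R * L).
have := sorted_count_ge_nth eigA.1 (i := i); rewrite i_gt0 i_le => /(_ isT).
rewrite (eigenvalue_list_count _ QtQ QA eigA) => i_le_card.
apply: sorted_nth_ge_of_count eigB.1 i_gt0 _.
by rewrite (leq_trans (leq_trans i_le_card rkW)) // rkW_le // BE.
Qed.
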